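(* Let $h\in\mathbb N$ and let $W:\mathbb Z\to\mathbb R$ be the even function given for $a\ge0$ by $W(a)=2h-3a$ if $0\le a\le h$, $W(a)=a-2h$ if $h\le a\le 2h$, and $W(a)=0$ if $a>2h$. Then for all $q\in\mathbb N$, $\beta\in\mathbb R\setminus\mathbb Z$, $\ell\in\mathbb N$, $\alpha\in\mathbb R$: $$\sum_{\substack{a\in\mathbb Z\\ a\equiv0\ (\mathrm{mod}\ q)}}W(a)=2q\left\|\frac hq\right\|,\qquad \sum_{|a|\le 2h}W(a)e(a\beta)=\frac{4\sin^4(\pi h\beta)}{\sin^2(\pi\beta)},\qquad \sum_{b\in\mathbb Z}W(\ell b)e(b\alpha)\ge0.$$ Moreover, writing $E_X(\beta)=\sum_{a\in\mathbb Z,\,|a|\le X}e(a\beta)$, $$\frac1\ell\sum_{a\in\mathbb Z}W(a\ell)e(a\beta)=\frac{4\sin^2\bigl(\pi\beta\lfloor h/\ell\rfloor\bigr)-\sin^2\bigl(\pi\beta\lfloor 2h/\ell\rfloor\bigr)}{\sin^2(\pi\beta)}+4\left\{\frac h\ell\right\}E_{h/\ell}(\beta)-\left\{\frac{2h}\ell\right\}E_{2h/\ell}(\beta)$$ $$=2\Bigl(1-\cos\bigl(2\pi\beta\lfloor h/\ell\rfloor\bigr)\Bigr)\sum_{|a|\le h/\ell}\Bigl(\lfloor h/\ell\rfloor-|a|\Bigr)e(a\beta)-\left(2\left\{\frac h\ell\right\}-\left\{\frac{2h}\ell\right\}\right)E_{2\lfloor h/\ell\rfloor}(\beta)+4\left\{\frac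 h\ell\right\}E_{h/\ell}(\beta)-\left\{\frac{2h}\ell\right\}E_{2h/\ell}(\beta).$$
   Context: $e(\theta)=e^{2\pi i\theta}$; $\|r\|=\min_{n\in\mathbb Z}|r-n|$ is the distance to the nearest integer; $\lfloor\cdot\rfloor$ and $\{\cdot\}$ denote integer and fractional parts. *)

From Stdlib Require Import Reals ZArith Lra.
From Coquelicot Require Import Coquelicot.
Open Scope R_scope.

Definition e (t : R) : C := (cos (2 * PI * t), sin (2 * PI * t)).

Definition floorR (r : R) : Z := Int_part r.
Definition fracR (r : R) : R := r - IZR (floorR r).
Definition nidist (r : R) : R := Rmin (fracR r) (1 - fracR r).

(* sum of f a over the integers a with |a| <= N *)
Definition zsum (f : Z -> C) (N : nat) : C :=
  sum_n_m (fun k : nat => f (Z.of_nat k - Z.of_nat N)%Z) 0 (2 * N).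

Definition W (h : nat) (a : Z) : R :=
  let b := Z.abs a in
  let hz := Z.of_nat h in
  if (b <=? hz)%Z then IZR (2 * hz - 3 * b)
  else if (b <=? 2 * hz)%Z then IZR (b - 2 * hz)
  else 0.

(* E_X(beta) = sum_{|a| <= X} e(a beta), for X >= 0 *)
Definition EX (X beta : R) : C :=
  zsum (fun a => e (IZR a * beta)) (Z.to_nat (floorR X)).

From Stdlib Require Import Reals ZArith Lra Lia.
From Coquelicot Require Import Coquelicot.
Open Scope R_scope.

(* Write [W(a) = 4 (h - |a|)_+ - (2h - |a|)_+].  For a real radius [x = n + f] with
   [0 <= f < 1], the tent sum [sum_a (x - |a|)_+ e(a b)] equals [F_n + f D_n], where
   [D_n] and [F_n] are the Dirichlet and Fejer kernels, so every sum of [W] along the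
   multiples of [l] is [l (4 K(h/l) - K(2h/l))] for this tent kernel [K].  Everything then
   follows from [F_n (1 - cos 2 pi b) = 1 - cos 2 pi n b], i.e.
   [F_n = sin^2 (pi n b) / sin^2 (pi b)], and from the doubling identity
   [4 F_n - F_2n = 2 (1 - cos 2 pi n b) F_n >= 0]; at [b = 0] the kernels are [n^2]
   and [2n + 1], which gives the first formula. *)

Definition cosk (b : R) (k : nat) : R := cos (2 * PI * (INR k * b)).

(* [cos_sum w b N] is the value of [sum_{|a| <= N} w(|a|) e(a b)], which is real. *)
Fixpoint cos_sum (w : nat -> R) (b : R) (N : nat) : R :=
  match N with
  | O => w O
  | S n => cos_sum w b n + 2 * w (S n) * cosk b (S n)
  end.

Lemma zsum_0 (f : Z -> C) : zsum f 0 = f 0%Z.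
Proof. unfold zsum. simpl. rewrite sum_n_n. reflexivity. Qed.

Lemma zsum_succ (f : Z -> C) (N : nat) :
  zsum f (S N) = Cplus (Cplus (zsum f N) (f (Z.of_nat (S N)))) (f (- Z.of_nat (S N))%Z).
Proof.
  unfold zsum.
  replace (2 * S N)%nat with (S (S (2 * N))) by lia.
  rewrite sum_Sn_m, <- sum_n_m_S, sum_n_Sm by lia.
  rewrite (sum_n_m_ext_loc _ (fun k => f (Z.of_nat k - Z.of_nat N)%Z)).
  2:{ intros k _. f_equal. lia. }
  replace (Z.of_nat 0 - Z.of_nat (S N))%Z with (- Z.of_nat (S N))%Z by lia.
  replace (Z.of_nat (S (S (2 * N))) - Z.of_nat (S N))%Z with (Z.of_nat (S N)) by lia.
  change plus with Cplus.
  destruct (sum_n_m _ 0 (2 * N)) as [x y].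
  destruct (f (Z.of_nat (S N))) as [u v], (f (- Z.of_nat (S N))%Z) as [s t].
  unfold Cplus; simpl. f_equal; lra.
Qed.

Lemma zsum_even_weight (f : Z -> C) (v : nat -> R) (b : R) (N : nat) :
  (forall a, f a = Cmult (RtoC (v (Z.abs_nat a))) (e (IZR a * b))) ->
  zsum f N = RtoC (cos_sum v b N).
Proof.
  intros Hf. induction N as [|N IH].
  - rewrite zsum_0, Hf. unfold e, RtoC, Cmult. simpl.
    rewrite Rmult_0_l, Rmult_0_r, cos_0, sin_0. f_equal; ring.
  - rewrite zsum_succ, IH, !Hf.
    replace (Z.abs_nat (- Z.of_nat (S N))) with (S N) by lia.
    rewrite Zabs2Nat.id, opp_IZR, <- INR_IZR_INZ.
    unfold cos_sum, cosk, e, RtoC, Cmult, Cplus; fold cos_sum. cbn [fst snd].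
    replace (2 * PI * (- INR (S N) * b)) with (- (2 * PI * (INR (S N) * b))) by ring.
    rewrite cos_neg, sin_neg. f_equal; ring.
Qed.

Lemma e_mul_0 (x : R) : e (x * 0) = 1%C.
Proof. unfold e. rewrite !Rmult_0_r, cos_0, sin_0. reflexivity. Qed.

Lemma cos_sum_ext (w1 w2 : nat -> R) (b : R) (N : nat) :
  (forall k, (k <= N)%nat -> w1 k = w2 k) -> cos_sum w1 b N = cos_sum w2 b N.
Proof.
  induction N as [|N IH]; intros H; simpl.
  - apply H; lia.
  - rewrite IH, H; [reflexivity | lia | intros; apply H; lia].
Qed.

Lemma cos_sum_lin (w1 w2 : nat -> R) (x y b : R) (N : nat) :
  cos_sum (fun k => x * w1 k + y * w2 k) b N = x * cos_sum w1 b N + y * cos_sum w2 b N.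
Proof. induction N as [|N IH]; simpl; [ring | rewrite IH; ring]. Qed.

Lemma cos_sum_support (w : nat -> R) (b : R) (N N' : nat) :
  (forall k, (N < k)%nat -> w k = 0) -> (N <= N')%nat -> cos_sum w b N' = cos_sum w b N.
Proof.
  intros H HN. induction HN as [|N' HN IH]; [reflexivity|].
  simpl. rewrite IH, H by lia. ring.
Qed.

Definition dirichlet (b : R) (n : nat) : R := cos_sum (fun _ => 1) b n.
Definition fejer (b : R) (n : nat) : R := cos_sum (fun k => INR n - INR k) b n.

Lemma fejer_succ (b : R) (n : nat) : fejer b (S n) = fejer b n + dirichlet b n.
Proof.
  unfold fejer, dirichlet. cbn [cos_sum].
  rewrite Rminus_diag, Rmult_0_r, Rmult_0_l, Rplus_0_r.
  rewrite <- (Rmult_1_l (cos_sum (fun k => INR n - INR k) b n)),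
          <- (Rmult_1_l (cos_sum (fun _ => 1) b n)), <- cos_sum_lin.
  apply cos_sum_ext. intros k _. rewrite S_INR. ring.
Qed.

Lemma cosk_0 (b : R) : cosk b 0 = 1.
Proof. unfold cosk. rewrite Rmult_0_l, Rmult_0_r. apply cos_0. Qed.

Lemma cosk_double (b : R) (n : nat) : cosk b (2 * n) = 2 * cosk b n ^ 2 - 1.
Proof.
  unfold cosk. rewrite mult_INR.
  replace (2 * PI * (INR 2 * INR n * b)) with (2 * (2 * PI * (INR n * b))) by (simpl; ring).
  rewrite cos_2a_cos. ring.
Qed.

Lemma cosk_succ_succ (b : R) (k : nat) :
  cosk b (S (S k)) + cosk b k = 2 * cosk b (S k) * cosk b 1.
Proof.
  unfold cosk. rewrite (S_INR (S k)), (S_INR k). change (INR 1) with 1.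
  set (u := 2 * PI * ((INR k + 1) * b)). set (t := 2 * PI * (1 * b)).
  replace (2 * PI * ((INR k + 1 + 1) * b)) with (u + t) by (unfold u, t; ring).
  replace (2 * PI * (INR k * b)) with (u - t) by (unfold u, t; ring).
  rewrite cos_plus, cos_minus. ring.
Qed.

Lemma dirichlet_mul (b : R) (n : nat) :
  dirichlet b n * (1 - cosk b 1) = cosk b n - cosk b (S n).
Proof.
  induction n as [|n IH].
  - unfold dirichlet. simpl. rewrite cosk_0. ring.
  - unfold dirichlet in *. cbn [cos_sum]. rewrite Rmult_plus_distr_r, IH.
    pose proof (cosk_succ_succ b n). lra.
Qed.

Lemma fejer_mul (b : R) (n : nat) : fejer b n * (1 - cosk b 1) = 1 - cosk b n.
Proof.
  induction n as [|n IH].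
  - unfold fejer. simpl. rewrite cosk_0. ring.
  - rewrite fejer_succ, Rmult_plus_distr_r, IH, dirichlet_mul. ring.
Qed.

Lemma cosk_eq_1 (b : R) (k : nat) : cosk b 1 = 1 -> cosk b k = 1.
Proof.
  intros H1.
  assert (Hs : sin (2 * PI * (INR 1 * b)) = 0).
  { pose proof (sin2_cos2 (2 * PI * (INR 1 * b))) as H.
    unfold cosk in H1. rewrite H1 in H. unfold Rsqr in H. nra. }
  enough (cos (2 * PI * (INR k * b)) = 1 /\ sin (2 * PI * (INR k * b)) = 0) by easy.
  induction k as [|k [IH1 IH2]].
  - simpl. rewrite Rmult_0_l, Rmult_0_r. split; [apply cos_0 | apply sin_0].
  - replace (2 * PI * (INR (S k) * b))
      with (2 * PI * (INR k * b) + 2 * PI * (INR 1 * b)) by (rewrite (S_INR k); change (INR 1) with 1; ring).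
    unfold cosk in H1. rewrite cos_plus, sin_plus, IH1, IH2, Hs, H1. split; ring.
Qed.

Lemma cos_sum_at_int (w : nat -> R) (b : R) (N : nat) :
  cosk b 1 = 1 -> cos_sum w b N = cos_sum w 0 N.
Proof.
  intros H. induction N as [|N IH]; simpl; [reflexivity|].
  rewrite IH, (cosk_eq_1 b) by exact H. unfold cosk. rewrite !Rmult_0_r, cos_0. ring.
Qed.

Lemma dirichlet_at_0 (n : nat) : dirichlet 0 n = 2 * INR n + 1.
Proof.
  induction n as [|n IH]; unfold dirichlet in *; cbn [cos_sum].
  - simpl; ring.
  - rewrite IH. unfold cosk. rewrite !Rmult_0_r, cos_0, S_INR. ring.
Qed.

Lemma fejer_at_0 (n : nat) : fejer 0 n = INR n ^ 2.
Proof.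
  induction n as [|n IH].
  - unfold fejer; simpl; ring.
  - rewrite fejer_succ, IH, dirichlet_at_0, S_INR. ring.
Qed.

Lemma fejer_double (b : R) (n : nat) :
  4 * fejer b n - fejer b (2 * n) = 2 * (1 - cosk b n) * fejer b n.
Proof.
  destruct (Req_dec (cosk b 1) 1) as [H|H].
  - unfold fejer. rewrite !(cos_sum_at_int _ b) by exact H. fold (fejer 0 n) (fejer 0 (2 * n)).
    rewrite !fejer_at_0, cosk_eq_1, mult_INR by exact H. simpl INR. ring.
  - apply (Rmult_eq_reg_r (1 - cosk b 1)); [|lra].
    transitivity (4 * (fejer b n * (1 - cosk b 1)) - fejer b (2 * n) * (1 - cosk b 1));
      [ring|].
    rewrite Rmult_assoc, !fejer_mul, cosk_double. ring.
Qed.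

Lemma fejer_nonneg (b : R) (n : nat) : 0 <= fejer b n.
Proof.
  destruct (Req_dec (cosk b 1) 1) as [H|H].
  - unfold fejer. rewrite (cos_sum_at_int _ b) by exact H. fold (fejer 0 n).
    rewrite fejer_at_0. apply pow2_ge_0.
  - pose proof (COS_bound (2 * PI * (INR 1 * b))) as Hc1.
    pose proof (COS_bound (2 * PI * (INR n * b))) as Hcn.
    pose proof (fejer_mul b n). unfold cosk in *. nra.
Qed.

(* With [X = (2n+1) pi b] and [Y = pi b], the left side times [1 - cos 2Y]
   equals [2 (cos X - cos Y)^2 + 2 sin^2 Y]. *)
Lemma fejer_odd_le (b : R) (n : nat) :
  fejer b (S (2 * n)) <= 4 * fejer b n + 2 * dirichlet b n.
Proof.
  destruct (Req_dec (cosk b 1) 1) as [H|H].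
  - unfold fejer, dirichlet. rewrite !(cos_sum_at_int _ b) by exact H.
    fold (fejer 0 n) (fejer 0 (S (2 * n))) (dirichlet 0 n).
    rewrite !fejer_at_0, dirichlet_at_0, S_INR, mult_INR. simpl INR. nra.
  - assert (Hc1 : cosk b 1 < 1) by (pose proof (COS_bound (2 * PI * (INR 1 * b))); unfold cosk in *; lra).
    apply (Rmult_le_reg_r (1 - cosk b 1)); [lra|].
    rewrite Rmult_plus_distr_r, !(Rmult_assoc 4), !(Rmult_assoc 2), !fejer_mul, dirichlet_mul.
    unfold cosk.
    set (X := PI * ((2 * INR n + 1) * b)). set (Y := PI * b).
    replace (2 * PI * (INR n * b)) with (X - Y) by (unfold X, Y; ring).
    replace (2 * PI * (INR (S n) * b)) with (X + Y) by (unfold X, Y; rewrite S_INR; ring).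
    replace (2 * PI * (INR (S (2 * n)) * b)) with (2 * X)
      by (unfold X; rewrite S_INR, mult_INR; simpl INR; ring).
    rewrite cos_plus, cos_minus, cos_2a_cos.
    pose proof (sin2_cos2 Y) as HY. unfold Rsqr in HY.
    pose proof (pow2_ge_0 (cos X - cos Y)). pose proof (pow2_ge_0 (sin Y)). nra.
Qed.

Lemma sin_sq_cosk (b : R) (k : nat) : sin (PI * b * INR k) ^ 2 = (1 - cosk b k) / 2.
Proof.
  unfold cosk. replace (2 * PI * (INR k * b)) with (2 * (PI * b * INR k)) by ring.
  rewrite cos_2a_sin. field.
Qed.

Lemma sin_PI_nonint (b : R) : ~ (exists z : Z, b = IZR z) -> sin (PI * b) <> 0.
Proof.
  intros Hb Hs. apply Hb. destruct (sin_eq_0_0 _ Hs) as [k Hk].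
  exists k. pose proof PI_RGT_0. apply (Rmult_eq_reg_r PI); lra.
Qed.

Lemma fejer_sin_ratio (b : R) (n : nat) :
  sin (PI * b) <> 0 -> fejer b n = sin (PI * b * INR n) ^ 2 / sin (PI * b) ^ 2.
Proof.
  intros Hs.
  assert (H1 : sin (PI * b) ^ 2 = (1 - cosk b 1) / 2)
    by (rewrite <- sin_sq_cosk; change (INR 1) with 1; rewrite Rmult_1_r; reflexivity).
  assert (sin (PI * b) ^ 2 <> 0) by (apply pow_nonzero, Hs).
  rewrite H1, sin_sq_cosk, <- fejer_mul. field. lra.
Qed.

Lemma fracR_bounds (x : R) : 0 <= fracR x < 1.
Proof. unfold fracR, floorR. destruct (base_Int_part x). lra. Qed.

Lemma floorR_nat_add (n : nat) (f : R) : 0 <= f < 1 -> floorR (INR n + f) = Z.of_nat n.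
Proof.
  intros Hf. unfold floorR. symmetry. apply (Int_part_frac_part_spec _ _ f Hf).
  rewrite <- INR_IZR_INZ. reflexivity.
Qed.

Lemma fracR_nat_add (n : nat) (f : R) : 0 <= f < 1 -> fracR (INR n + f) = f.
Proof. intros Hf. unfold fracR. rewrite floorR_nat_add, <- INR_IZR_INZ by exact Hf. ring. Qed.

Lemma INR_floorR (x : R) : 0 <= x -> INR (Z.to_nat (floorR x)) = IZR (floorR x).
Proof.
  intros Hx. assert (Hz : (-1 < floorR x)%Z)
    by (apply lt_IZR; unfold floorR; destruct (base_Int_part x); simpl; lra).
  rewrite INR_IZR_INZ, Z2Nat.id by lia. reflexivity.
Qed.

Lemma nonneg_nat_add (x : R) : 0 <= x -> exists n f, 0 <= f < 1 /\ x = INR n + f.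
Proof.
  intros Hx. exists (Z.to_nat (floorR x)), (fracR x). split; [apply fracR_bounds|].
  rewrite INR_floorR by exact Hx. unfold fracR. ring.
Qed.

Lemma twice_nat_add (n : nat) (f : R) : 0 <= f < 1 ->
  (0 <= 2 * f < 1 /\ 2 * (INR n + f) = INR (2 * n) + 2 * f) \/
  (0 <= 2 * f - 1 < 1 /\ 2 * (INR n + f) = INR (S (2 * n)) + (2 * f - 1)).
Proof.
  intros Hf. rewrite S_INR, mult_INR. simpl INR.
  destruct (Rlt_or_le f (1 / 2)); [left | right]; split; lra.
Qed.

Definition tent (x : R) (k : nat) : R := Rmax 0 (x - INR k).

(* [tent_kernel b x] is the value of [sum_{|a| <= x} (x - |a|) e(a b)], see [cos_sum_tent]. *)
Definition tent_kernel (b x : R) : R :=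
  fejer b (Z.to_nat (floorR x)) + fracR x * dirichlet b (Z.to_nat (floorR x)).

Lemma tent_kernel_nat_add (b : R) (n : nat) (f : R) :
  0 <= f < 1 -> tent_kernel b (INR n + f) = fejer b n + f * dirichlet b n.
Proof.
  intros Hf. unfold tent_kernel. rewrite floorR_nat_add, fracR_nat_add, Nat2Z.id by exact Hf.
  reflexivity.
Qed.

Lemma cos_sum_tent (b x : R) (N : nat) :
  0 <= x -> x <= INR N -> cos_sum (tent x) b N = tent_kernel b x.
Proof.
  intros Hx HxN. destruct (nonneg_nat_add x Hx) as (n & f & Hf & ->).
  rewrite tent_kernel_nat_add by exact Hf.
  rewrite (cos_sum_support _ _ n N).
  2:{ intros k Hk. assert (INR n + 1 <= INR k) by (rewrite <- S_INR; apply le_INR; lia).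
      unfold tent, Rmax. destruct Rle_dec; lra. }
  2:{ apply INR_le. lra. }
  unfold fejer, dirichlet.
  rewrite <- (Rmult_1_l (cos_sum (fun k => INR n - INR k) b n)), <- cos_sum_lin.
  apply cos_sum_ext. intros k Hk. apply le_INR in Hk.
  unfold tent, Rmax. destruct Rle_dec; lra.
Qed.

Lemma fejer_double_le (b : R) (n : nat) : fejer b (2 * n) <= 4 * fejer b n.
Proof.
  pose proof (fejer_double b n). pose proof (fejer_nonneg b n).
  pose proof (COS_bound (2 * PI * (INR n * b))). unfold cosk in *. nra.
Qed.

(* [4 K(n + f) - K(2n + 2f)] is affine in [f] on [[0, 1/2]] and on [[1/2, 1]]; at
   [f = 0, 1/2, 1] it is nonnegative by [fejer_double_le] (at [n] and [n + 1]) and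
   [fejer_odd_le]. *)
Lemma tent_kernel_twice_le (b x : R) : 0 <= x -> tent_kernel b (2 * x) <= 4 * tent_kernel b x.
Proof.
  intros Hx. destruct (nonneg_nat_add x Hx) as (n & f & Hf & ->).
  rewrite tent_kernel_nat_add by exact Hf.
  pose proof (fejer_double_le b n) as Hn. pose proof (fejer_double_le b (S n)) as HSn.
  pose proof (fejer_odd_le b n) as Hodd.
  replace (2 * S n)%nat with (S (S (2 * n))) in HSn by lia.
  rewrite !fejer_succ in HSn. rewrite fejer_succ in Hodd.
  destruct (twice_nat_add n f Hf) as [[Hf2 ->] | [Hf2 ->]];
    rewrite tent_kernel_nat_add by exact Hf2.
  - assert (0 <= (1 - 2 * f) * (4 * fejer b n - fejer b (2 * n))) by (apply Rmult_le_pos; lra).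
    assert (0 <= 2 * f * (4 * fejer b n + 2 * dirichlet b n
                          - (fejer b (2 * n) + dirichlet b (2 * n)))) by (apply Rmult_le_pos; lra).
    nra.
  - rewrite fejer_succ.
    assert (0 <= (2 * f - 1) * (4 * (fejer b n + dirichlet b n)
          - (fejer b (2 * n) + dirichlet b (2 * n) + dirichlet b (S (2 * n)))))
      by (apply Rmult_le_pos; lra).
    assert (0 <= (2 - 2 * f) * (4 * fejer b n + 2 * dirichlet b n
                                - (fejer b (2 * n) + dirichlet b (2 * n))))
      by (apply Rmult_le_pos; lra).
    nra.
Qed.

Lemma tent_kernel_twice_at_0 (x : R) :
  0 <= x -> 4 * tent_kernel 0 x - tent_kernel 0 (2 * x) = 2 * nidist x.
Proof.
  intros Hx. destruct (nonneg_nat_add x Hx) as (n & f & Hf & ->).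
  unfold nidist, Rmin. rewrite fracR_nat_add, tent_kernel_nat_add by exact Hf.
  destruct (twice_nat_add n f Hf) as [[Hf2 ->] | [Hf2 ->]];
    rewrite tent_kernel_nat_add, !fejer_at_0, !dirichlet_at_0, ?S_INR, !mult_INR by exact Hf2;
    simpl INR; destruct Rle_dec; first [lra | ring | replace f with (1 / 2) by lra; field].
Qed.

Lemma W_abs (h : nat) (z1 z2 : Z) : Z.abs z1 = Z.abs z2 -> W h z1 = W h z2.
Proof. intros H. unfold W. rewrite H. reflexivity. Qed.

Lemma W_tent (h : nat) (z : Z) :
  W h z = 4 * tent (INR h) (Z.abs_nat z) - tent (2 * INR h) (Z.abs_nat z).
Proof.
  unfold W, tent. rewrite !INR_IZR_INZ, Zabs2Nat.id_abs.
  pose proof (IZR_le _ _ (Z.abs_nonneg z)).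
  destruct (Z.leb_spec (Z.abs z) (Z.of_nat h)) as [H1|H1].
  - apply IZR_le in H1. rewrite minus_IZR, !mult_IZR.
    unfold Rmax; repeat destruct Rle_dec; simpl in *; lra.
  - apply IZR_lt in H1.
    destruct (Z.leb_spec (Z.abs z) (2 * Z.of_nat h)) as [H2|H2];
      [apply IZR_le in H2; rewrite minus_IZR | apply IZR_lt in H2];
      rewrite !mult_IZR in *; unfold Rmax; repeat destruct Rle_dec; simpl in *; lra.
Qed.

Lemma tent_dilate (x : R) (l k : nat) :
  (1 <= l)%nat -> tent x (l * k) = INR l * tent (x / INR l) k.
Proof.
  intros Hl. assert (0 < INR l) by (apply lt_0_INR; lia).
  unfold tent. rewrite mult_INR, <- RmaxRmult, Rmult_0_r by lra.
  f_equal. field. lra.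
Qed.

Lemma cos_sum_W_dilate (h l : nat) (b : R) : (1 <= l)%nat ->
  cos_sum (fun k => W h (Z.of_nat (l * k))) b (2 * h)
  = INR l * (4 * tent_kernel b (INR h / INR l) - tent_kernel b (2 * INR h / INR l)).
Proof.
  intros Hl. assert (1 <= INR l) by (apply (le_INR 1); exact Hl).
  pose proof (pos_INR h).
  assert (0 <= INR h / INR l <= INR h).
  { split; [apply Rdiv_le_0_compat; lra|].
    apply Rmult_le_reg_r with (INR l); [lra|]. field_simplify; nra. }
  rewrite <- !(cos_sum_tent b _ (2 * h)) by (rewrite ?mult_INR; simpl INR; unfold Rdiv in *; nra).
  transitivity (cos_sum (fun k => INR l * 4 * tent (INR h / INR l) k
                                  + - INR l * tent (2 * INR h / INR l) k) b (2 * h)).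
  - apply cos_sum_ext. intros k _.
    rewrite W_tent, Zabs2Nat.id, !tent_dilate by exact Hl. ring.
  - rewrite cos_sum_lin. ring.
Qed.

Lemma zsum_W_dilate (h l : nat) (b : R) (g : Z -> Z) : (1 <= l)%nat ->
  (forall a, Z.abs (g a) = Z.of_nat (l * Z.abs_nat a)) ->
  zsum (fun a => Cmult (RtoC (W h (g a))) (e (IZR a * b))) (2 * h)
  = RtoC (INR l * (4 * tent_kernel b (INR h / INR l) - tent_kernel b (2 * INR h / INR l))).
Proof.
  intros Hl Hg. rewrite <- cos_sum_W_dilate by exact Hl.
  apply zsum_even_weight. intros a. do 2 f_equal. apply W_abs. rewrite Hg. lia.
Qed.

Lemma EX_dirichlet (X b : R) : EX X b = RtoC (dirichlet b (Z.to_nat (floorR X))).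
Proof. apply zsum_even_weight. intros a. symmetry. apply Cmult_1_l. Qed.

Lemma fejer_floor_twice (b x : R) : 0 <= x ->
  fejer b (Z.to_nat (floorR (2 * x)))
  = fejer b (2 * Z.to_nat (floorR x))
    + (2 * fracR x - fracR (2 * x)) * dirichlet b (2 * Z.to_nat (floorR x)).
Proof.
  intros Hx. destruct (nonneg_nat_add x Hx) as (n & f & Hf & ->).
  rewrite floorR_nat_add, fracR_nat_add, Nat2Z.id by exact Hf.
  destruct (twice_nat_add n f Hf) as [[Hf2 ->] | [Hf2 ->]];
    rewrite floorR_nat_add, fracR_nat_add, Nat2Z.id by exact Hf2.
  - ring.
  - rewrite fejer_succ. ring.
Qed.

Lemma sum_W_multiples (h q : nat) : (1 <= q)%nat ->
  zsum (fun k => RtoC (W h (Z.of_nat q * k)%Z)) (2 * h)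
  = RtoC (2 * INR q * nidist (INR h / INR q)).
Proof.
  intros Hq.
  rewrite (zsum_even_weight _ (fun k => W h (Z.of_nat (q * k))) 0).
  2:{ intros a. rewrite e_mul_0, Cmult_1_r. f_equal. apply W_abs. lia. }
  rewrite cos_sum_W_dilate by exact Hq.
  replace (2 * INR h / INR q) with (2 * (INR h / INR q)) by (unfold Rdiv; ring).
  rewrite tent_kernel_twice_at_0.
  - f_equal. ring.
  - apply Rdiv_le_0_compat; [apply pos_INR | apply lt_0_INR; lia].
Qed.

Lemma sum_W_exp (h : nat) (beta : R) : ~ (exists z : Z, beta = IZR z) ->
  zsum (fun a => Cmult (RtoC (W h a)) (e (IZR a * beta))) (2 * h)
  = RtoC (4 * sin (PI * INR h * beta) ^ 4 / sin (PI * beta) ^ 2).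
Proof.
  intros Hb. pose proof (sin_PI_nonint beta Hb) as Hs.
  rewrite (zsum_W_dilate h 1 beta (fun a => a)) by (reflexivity || lia).
  replace (INR h / INR 1) with (INR h + 0) by (simpl; field).
  replace (2 * INR h / INR 1) with (INR (2 * h) + 0) by (rewrite mult_INR; simpl; field).
  rewrite !tent_kernel_nat_add, !Rmult_0_l, !Rplus_0_r by lra.
  rewrite fejer_double, fejer_sin_ratio by exact Hs.
  replace (1 - cosk beta h) with (2 * sin (PI * beta * INR h) ^ 2)
    by (rewrite sin_sq_cosk; field).
  f_equal. replace (PI * INR h * beta) with (PI * beta * INR h) by ring.
  simpl INR. field. exact Hs.
Qed.

Lemma sum_W_dilate_nonneg (h l : nat) (alpha : R) : (1 <= l)%nat ->
  let S := zsum (fun b => Cmult (RtoC (W h (Z.of_nat l * b)%Z)) (e (IZR b * alpha))) (2 * h) in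
  Im S = 0 /\ 0 <= Re S.
Proof.
  intros Hl S. unfold S.
  rewrite (zsum_W_dilate h l alpha (fun b => (Z.of_nat l * b)%Z)) by (exact Hl || lia).
  split; [reflexivity|]. simpl.
  apply Rmult_le_pos; [apply pos_INR|].
  replace (2 * INR h / INR l) with (2 * (INR h / INR l)) by (unfold Rdiv; ring).
  apply Rge_le, Rge_minus, Rle_ge, tent_kernel_twice_le.
  apply Rdiv_le_0_compat; [apply pos_INR | apply lt_0_INR; lia].
Qed.

Lemma sum_W_dilate_formulas (h l : nat) (beta : R) :
  (1 <= l)%nat -> ~ (exists z : Z, beta = IZR z) ->
    (let m := IZR (floorR (INR h / INR l)) in
     let M := IZR (floorR (2 * INR h / INR l)) in
     let f1 := fracR (INR h / INR l) in
     let f2 := fracR (2 * INR h / INR l) in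
     let LHS := Cmult (RtoC (/ INR l))
                  (zsum (fun a => Cmult (RtoC (W h (a * Z.of_nat l)%Z)) (e (IZR a * beta)))
                        (2 * h)) in
     let tail := Cminus (Cmult (RtoC (4 * f1)) (EX (INR h / INR l) beta))
                        (Cmult (RtoC f2) (EX (2 * INR h / INR l) beta)) in
     LHS = Cplus (RtoC ((4 * sin (PI * beta * m) ^ 2 - sin (PI * beta * M) ^ 2)
                         / sin (PI * beta) ^ 2)) tail
     /\
     LHS = Cplus
             (Cminus
               (Cmult (RtoC (2 * (1 - cos (2 * PI * beta * m))))
                  (zsum (fun a => Cmult (RtoC (m - IZR (Z.abs a))) (e (IZR a * beta)))
                        (Z.to_nat (floorR (INR h / INR l)))))
               (Cmult (RtoC (2 * f1 - f2)) (EX (2 * m) beta)))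
             tail).
Proof.
  intros Hl Hb. cbv zeta. pose proof (sin_PI_nonint beta Hb) as Hs.
  assert (Hl' : 0 < INR l) by (apply lt_0_INR; lia).
  rewrite (zsum_W_dilate h l beta (fun a => (a * Z.of_nat l)%Z)) by (exact Hl || lia).
  replace (2 * INR h / INR l) with (2 * (INR h / INR l)) by (unfold Rdiv; ring).
  assert (Hx : 0 <= INR h / INR l) by (apply Rdiv_le_0_compat; [apply pos_INR | lra]).
  set (x := INR h / INR l) in *.
  rewrite (zsum_even_weight _ (fun k => INR (Z.to_nat (floorR x)) - INR k) beta).
  2:{ intros a. rewrite INR_floorR, INR_IZR_INZ, Zabs2Nat.id_abs by exact Hx. reflexivity. }
  fold (fejer beta (Z.to_nat (floorR x))).
  rewrite <- (INR_floorR x), <- (INR_floorR (2 * x)) by lra.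
  set (n := Z.to_nat (floorR x)) in *. set (N := Z.to_nat (floorR (2 * x))) in *.
  replace (2 * INR n) with (INR (2 * n)) by (rewrite mult_INR; reflexivity).
  rewrite !EX_dirichlet. unfold floorR at 3. rewrite Int_part_INR, Nat2Z.id.
  unfold tent_kernel. fold n N.
  rewrite <- !RtoC_mult, <- !RtoC_minus, <- !RtoC_plus.
  split; f_equal.
  - rewrite !(fejer_sin_ratio beta) by exact Hs. field. split; [exact Hs | lra].
  - replace (cos (2 * PI * beta * INR n)) with (cosk beta n) by (unfold cosk; f_equal; ring).
    rewrite <- fejer_double. unfold N. rewrite fejer_floor_twice by exact Hx. fold n.
    field. lra.
Qed.

Theorem lemma4 (h : nat) :
  forall (q : nat) (beta : R) (l : nat) (alpha : R),
    (1 <= q)%nat ->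
    ~ (exists z : Z, beta = IZR z) ->
    (1 <= l)%nat ->
    zsum (fun k => RtoC (W h (Z.of_nat q * k)%Z)) (2 * h)
      = RtoC (2 * INR q * nidist (INR h / INR q))
    /\
    zsum (fun a => Cmult (RtoC (W h a)) (e (IZR a * beta))) (2 * h)
      = RtoC (4 * sin (PI * INR h * beta) ^ 4 / sin (PI * beta) ^ 2)
    /\
    (let S := zsum (fun b => Cmult (RtoC (W h (Z.of_nat l * b)%Z)) (e (IZR b * alpha)))
                   (2 * h) in
     Im S = 0 /\ 0 <= Re S)
    /\
    (let m := IZR (floorR (INR h / INR l)) in
     let M := IZR (floorR (2 * INR h / INR l)) in
     let f1 := fracR (INR h / INR l) in
     let f2 := fracR (2 * INR h / INR l) in
     let LHS := Cmult (RtoC (/ INR l))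
                  (zsum (fun a => Cmult (RtoC (W h (a * Z.of_nat l)%Z)) (e (IZR a * beta)))
                        (2 * h)) in
     let tail := Cminus (Cmult (RtoC (4 * f1)) (EX (INR h / INR l) beta))
                        (Cmult (RtoC f2) (EX (2 * INR h / INR l) beta)) in
     LHS = Cplus (RtoC ((4 * sin (PI * beta * m) ^ 2 - sin (PI * beta * M) ^ 2)
                         / sin (PI * beta) ^ 2)) tail
     /\
     LHS = Cplus
             (Cminus
               (Cmult (RtoC (2 * (1 - cos (2 * PI * beta * m))))
                  (zsum (fun a => Cmult (RtoC (m - IZR (Z.abs a))) (e (IZR a * beta)))
                        (Z.to_nat (floorR (INR h / INR l)))))
               (Cmult (RtoC (2 * f1 - f2)) (EX (2 * m) beta)))
             tail).
Proof.
  intros q beta l alpha Hq Hb Hl.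
  split; [|split; [|split]].
  - exact (sum_W_multiples h q Hq).
  - exact (sum_W_exp h beta Hb).
  - exact (sum_W_dilate_nonneg h l alpha Hl).
  - exact (sum_W_dilate_formulas h l beta Hl Hb).
Qed.
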